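(* Let $M$ be a commutative ind-monoid split with respect to a line bundle $L$, and let $N\subseteq M$ be a submonoid. Then the ideal $I_N\subseteq \mathcal{R}(M,L)$ of sections vanishing on $N$ is spanned, as a complex vector space, by differences of characters $\chi_i-\chi_j$ (with $\chi_i,\chi_j$ characters of $M$ such that $\chi_i-\chi_j$ vanishes on $N$).
   Context: An ind-variety is a set $X$ with a filtration $X_0\subset X_1\subset\cdots$ by finite-dimensional algebraic varieties, each inclusion a closed embedding. A line bundle $L$ on $X$ is a compatible family of line bundles $L_n$ on $X_n$; a section is a compatible family of sections; $\mathcal{R}(X,L)=\varprojlim \mathcal{R}(X_n,L_n)$. An ind-monoid is an ind-variety $M=\bigcup M_g$ with associative multiplication maps $m_{g,h}:M_g\times M_h\to M_{g+h}$ compatible with restrictions, and an identity; commutative if the multiplication is. $M$ is split with respect to $L$ if (1) $m_{g,h}^*L_{g+h}\cong pr_1^*L_g\otimes pr_2^*L_h$ for all $g,h$, and (2) $\mathcal{R}(M,L)$ is spanned as a vector space by characters, a section $\chi$ being a character if $m_{g,h}^*\chi_{g+h}=\chi_g\chi_h$ for all $g,h$. A submonoid is a sub-ind-variety closed under multiplication containing the identity. *)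

From mathcomp Require Import all_boot all_algebra complex.
From mathcomp Require Import Rstruct.
Set Implicit Arguments. Unset Strict Implicit. Unset Printing Implicit Defensive.
Import GRing.Theory.
Local Open Scope ring_scope.

Definition Cplx : fieldType := (Rdefinitions.R)[i].

(* A commutative ind-monoid M = \bigcup_g M_g (filtration indexed by nat), with a
   line bundle L = (L_g)_g, recorded pointwise:
   - [lev g x] means x \in M_g;
   - the fibres of L are trivialised pointwise (identified with Cplx), so a
     section of L_g is a function on points with values in Cplx;
   - [regular g s] means that the restriction of s to M_g is a (regular) section
     of L_g; it only depends on the values of s on M_g, the regular sections
     form a vector space, and restriction M_{g+1} -> M_g preserves regularity;
   - the isomorphism m_{g,h}^* L_{g+h} ~= pr_1^* L_g (x) pr_2^* L_h of the
     splitting condition (1) is recorded by its (nonzero) value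
     [split_iso g h x y] on the fibres at (x,y) \in M_g x M_h. *)
Record indMonoidLB := IndMonoidLB {
  pt : Type;
  lev : nat -> pt -> Prop;
  lev_mono : forall g x, lev g x -> lev g.+1 x;
  lev_cover : forall x, exists g, lev g x;
  mul : pt -> pt -> pt;
  one : pt;
  lev_one : exists g, lev g one;
  lev_mul : forall g h x y, lev g x -> lev h y -> lev (g + h)%N (mul x y);
  mulA : forall x y z, mul x (mul y z) = mul (mul x y) z;
  mul1x : forall x, mul one x = x;
  mulx1 : forall x, mul x one = x;
  regular : nat -> (pt -> Cplx) -> Prop;
  regular_local : forall g s t, (forall x, lev g x -> s x = t x) ->
                   regular g s -> regular g t;
  regular0 : forall g, regular g (fun _ => 0);
  regularD : forall g s t, regular g s -> regular g t ->
               regular g (fun x => s x + t x);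
  regularZ : forall g (a : Cplx) s, regular g s -> regular g (fun x => a * s x);
  regular_restr : forall g s, regular g.+1 s -> regular g s;
  split_iso : nat -> nat -> pt -> pt -> Cplx;
  split_iso_neq0 : forall g h x y, lev g x -> lev h y -> split_iso g h x y != 0
}.

Definition commutative_im (M : indMonoidLB) : Prop :=
  forall x y : pt M, mul x y = mul y x.

(* R(M, L) = lim R(M_g, L_g): compatible families of sections *)
Definition section (M : indMonoidLB) (s : pt M -> Cplx) : Prop :=
  forall g, regular g s.

(* characters: m_{g,h}^* chi_{g+h} = chi_g chi_h for all g, h *)
Definition character (M : indMonoidLB) (chi : pt M -> Cplx) : Prop :=
  section chi /\
  forall g h x y, lev g x -> lev h y ->
    chi (mul x y) = split_iso g h x y * (chi x * chi y).

Definition lincomb (T : Type) (l : seq (Cplx * (T -> Cplx))) : T -> Cplx :=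
  fun x => \sum_(p <- l) p.1 * p.2 x.

(* M is split with respect to L: (1) is built into [indMonoidLB]; (2) says
   that R(M, L) is spanned by characters. *)
Definition split_wrt_L (M : indMonoidLB) : Prop :=
  forall s, section s ->
    exists l : seq (Cplx * (pt M -> Cplx)),
      (forall p, List.In p l -> character p.2) /\ s = lincomb l.

(* A submonoid: a sub-ind-variety (N_g := N \cap M_g) closed under
   multiplication and containing the identity. *)
Definition submonoid (M : indMonoidLB) (N : pt M -> Prop) : Prop :=
  N (@one M) /\ forall x y, N x -> N y -> N (mul x y).

Definition vanishes_on (M : indMonoidLB) (N : pt M -> Prop) (s : pt M -> Cplx) :=
  forall x, N x -> s x = 0.

Definition ideal_IN (M : indMonoidLB) (N : pt M -> Prop) (s : pt M -> Cplx) :=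
  section s /\ vanishes_on N s.

(** Write a section of [I_N] as a combination of characters.  Two characters
    that agree on [N] can be merged at the cost of their difference, which
    vanishes on [N].  Once the remaining characters are pairwise distinct on
    [N], Artin's independence argument applies: the splitting isomorphism only
    contributes a nonzero factor [c x y] common to all characters, so each
    remaining term [a chi] vanishes on [N], and [a chi = a (chi - 0)] with the
    zero character. *)

From Pilot Require Import Defs.
From mathcomp Require Import all_boot all_algebra complex.
From mathcomp Require Import Rstruct.
From mathcomp Require Import ring.
From Stdlib Require List.
From Stdlib Require Import FunctionalExtensionality Classical.
Import GRing.Theory.
Local Open Scope ring_scope.

Lemma eq_bigr_In (R : nmodType) (I : Type) (r : seq I) (F G : I -> R) :
  (forall i, List.In i r -> F i = G i) -> \sum_(i <- r) F i = \sum_(i <- r) G i.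
Proof.
elim: r => [|i r IHr] eqFG; first by rewrite !big_nil.
rewrite !big_cons eqFG /=; last by left.
by rewrite IHr // => j rj; apply: eqFG; right.
Qed.

Lemma big1_In (R : nmodType) (I : Type) (r : seq I) (F : I -> R) :
  (forall i, List.In i r -> F i = 0) -> \sum_(i <- r) F i = 0.
Proof. by move/eq_bigr_In->; rewrite big1. Qed.

Definition differ_on {T R : Type} (N : T -> Prop) (f g : T -> R) :=
  exists2 y, N y & f y <> g y.

Section TwistedArtin.

Context {R : idomainType} {T : Type} {mul : T -> T -> T} {N : T -> Prop}.
Hypothesis mulN : forall x y, N x -> N y -> N (mul x y).
Context {F : (T -> R) -> Prop}.
Hypothesis F_twisted_mul : forall x y, N x -> N y ->
  exists2 c, c != 0 & forall f, F f -> f (mul x y) = c * (f x * f y).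

Let vanishing_sum (l : seq (R * (T -> R))) :=
  forall x, N x -> \sum_(p <- l) p.1 * p.2 x = 0.

(* Artin's trick: evaluate the relation at [x y] and at [x] and eliminate;
   the twist [c] drops out because it is common to all the [f] in [F]. *)
Lemma vanishing_sum_shift l y b :
  (forall p, List.In p l -> F p.2) -> N y -> vanishing_sum l ->
  vanishing_sum [seq (p.1 * (p.2 y - b), p.2) | p <- l].
Proof.
move=> Fl Ny l0 x Nx; rewrite big_map.
have [c c_neq0 Fc] := F_twisted_mul _ _ Nx Ny.
have l0_xy : \sum_(p <- l) p.1 * (p.2 x * p.2 y) = 0.
  have : c * \sum_(p <- l) p.1 * (p.2 x * p.2 y) = 0.
    rewrite mulr_sumr -[RHS](l0 _ (mulN _ _ Nx Ny)).
    by apply: eq_bigr_In => p lp; rewrite Fc; [ring | exact: Fl].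
  by move/eqP; rewrite mulf_eq0 (negPf c_neq0) => /eqP.
transitivity (\sum_(p <- l) p.1 * (p.2 x * p.2 y) - b * \sum_(p <- l) p.1 * p.2 x).
  rewrite mulr_sumr -sumrB; apply: eq_bigr => p _ /=; ring.
by rewrite l0_xy l0 // mulr0 subr0.
Qed.

Lemma twisted_artin {l : seq (R * (T -> R))} :
  (forall p, List.In p l -> F p.2) ->
  List.ForallOrdPairs (differ_on N) (map snd l) -> vanishing_sum l ->
  forall p, List.In p l -> forall x, N x -> p.1 * p.2 x = 0.
Proof.
move: (erefl (map snd l)); move: {2 3}(map snd l) => fs.
elim: fs l => [|chi fs IHfs]; first by case.
case=> [//|[a f] l] [-> map_l] Fl dist l0.
have {dist} [chi_diff dist] : List.Forall (differ_on N chi) fs /\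
                              List.ForallOrdPairs (differ_on N) fs.
  by inversion dist.
have tail0 : forall p, List.In p l -> forall x, N x -> p.1 * p.2 x = 0.
  move=> p lp; have [y Ny neq_y] : differ_on N chi p.2.
    by apply: (proj1 (List.Forall_forall _ _) chi_diff); rewrite -map_l; apply: List.in_map.
  set l' := [seq (q.1 * (q.2 y - chi y), q.2) | q <- l].
  have l'0 : vanishing_sum l'.
    move=> x Nx; have := @vanishing_sum_shift _ y (chi y) Fl Ny l0 x Nx.
    by rewrite big_cons /= subrr mulr0 mul0r add0r.
  have map_l' : map snd l' = fs by rewrite -map_l -map_comp.
  have Fl' : forall q, List.In q l' -> F q.2.
    by move=> _ /List.in_map_iff[q [<- lq]]; apply: (Fl q); right.
  move=> x Nx; have /eqP := IHfs l' map_l' Fl' dist l'0 _ (List.in_map _ _ _ lp) x Nx.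
  rewrite /= mulrAC mulf_eq0 subr_eq0 => /orP[/eqP // | /eqP eq_y].
  by rewrite eq_y in neq_y.
move=> p [<- x Nx | ]; last exact: tail0.
have := l0 x Nx; rewrite big_cons /= big1_In ?addr0 // => q lq.
exact: tail0.
Qed.

End TwistedArtin.

Section CharacterDifferences.

Context {M : indMonoidLB} (N : pt M -> Prop).

Definition all_characters (l : seq (Cplx * (pt M -> Cplx))) :=
  forall p, List.In p l -> character p.2.

Definition diff_lincomb (D : seq (Cplx * ((pt M -> Cplx) * (pt M -> Cplx)))) :=
  lincomb [seq (p.1, fun x => p.2.1 x - p.2.2 x) | p <- D].

Definition vanishing_char_diffs (D : seq (Cplx * ((pt M -> Cplx) * (pt M -> Cplx)))) :=
  forall p, List.In p D ->
    [/\ character p.2.1, character p.2.2 &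
        vanishes_on N (fun x => p.2.1 x - p.2.2 x)].

Lemma lincomb_cons a (f : pt M -> Cplx) l x :
  lincomb ((a, f) :: l) x = a * f x + lincomb l x.
Proof. by rewrite /lincomb big_cons. Qed.

Lemma lincomb_cat (l1 l2 : seq (Cplx * (pt M -> Cplx))) x :
  lincomb (l1 ++ l2) x = lincomb l1 x + lincomb l2 x.
Proof. by rewrite /lincomb big_cat. Qed.

Lemma diff_lincomb_cons a (f g : pt M -> Cplx) D x :
  diff_lincomb ((a, (f, g)) :: D) x = a * (f x - g x) + diff_lincomb D x.
Proof. exact: lincomb_cons. Qed.

Lemma diff_lincomb_cat D1 D2 x :
  diff_lincomb (D1 ++ D2) x = diff_lincomb D1 x + diff_lincomb D2 x.
Proof. by rewrite /diff_lincomb map_cat lincomb_cat. Qed.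

Lemma section_sub (f g : pt M -> Cplx) :
  section f -> section g -> section (fun x => f x - g x).
Proof.
move=> sf sg n; apply: (regular_local _ (regularD (sf n) (regularZ (-1) (sg n)))).
by move=> x _; rewrite mulN1r.
Qed.

Lemma section_lincomb (l : seq (Cplx * (pt M -> Cplx))) :
  (forall p, List.In p l -> section p.2) -> section (lincomb l).
Proof.
elim: l => [|[a f] l IHl] sec_l n.
  by apply: (regular_local _ (regular0 _ n)) => x _; rewrite /lincomb big_nil.
have sec_f : section f by apply: (sec_l (a, f)); left.
have sec_tail : section (lincomb l) by apply: IHl => p lp; apply: sec_l; right.
apply: (regular_local _ (regularD (regularZ a (sec_f n)) (sec_tail n))).
by move=> x _; rewrite lincomb_cons.
Qed.

Lemma character0 : character (fun _ : pt M => 0).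
Proof. by split=> [n | *]; [apply: regular0 | rewrite !mulr0]. Qed.

Lemma character_mul_twisted (x y : pt M) :
  exists2 c : Cplx, c != 0 &
    forall chi : pt M -> Cplx, character chi -> chi (Defs.mul x y) = c * (chi x * chi y).
Proof.
have [[gx x_gx] [gy y_gy]] := (lev_cover x, lev_cover y).
exists (split_iso gx gy x y); first exact: split_iso_neq0.
by move=> chi [_ chi_mul]; apply: chi_mul.
Qed.

Lemma vanishing_char_diffs_ideal {D} :
  vanishing_char_diffs D -> ideal_IN N (diff_lincomb D).
Proof.
move=> DN; split.
  apply: section_lincomb => _ /List.in_map_iff[p [<- Dp]].
  by have [[sec1 _] [sec2 _] _] := DN p Dp; apply: section_sub.
move=> x Nx; rewrite /diff_lincomb /lincomb big_map big1_In // => p Dp.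
by have [_ _ van] := DN p Dp; rewrite /= van ?mulr0.
Qed.

Lemma lincomb_characters_merge {l : seq (Cplx * (pt M -> Cplx))} :
  all_characters l ->
  exists D l', [/\ vanishing_char_diffs D, all_characters l',
    List.ForallOrdPairs (differ_on N) (map snd l') &
    forall x, lincomb l x = diff_lincomb D x + lincomb l' x].
Proof.
elim: l => [|[a chi] l IHl] chars.
  exists [::], [::]; split; [by [] | by [] | exact: List.FOP_nil |].
  by move=> x; rewrite /diff_lincomb /lincomb !big_nil addr0.
have chi_char : character chi by apply: (chars (a, chi)); left.
have [D [l' [DN chars' dist eq_l]]] := IHl (fun p lp => chars p (or_intror lp)).
case: (classic (exists2 q, List.In q l' & forall y, N y -> q.2 y = chi y)).
  move=> [[b psi] l'q agree]; have [l1 [l2 def_l']] := List.in_split _ _ l'q.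
  have psi_char : character psi by apply: (chars' (b, psi)).
  exists ((a, (chi, psi)) :: D), (l1 ++ (b + a, psi) :: l2); split.
  - move=> p [<- | Dp]; last exact: DN.
    by split=> // y Ny; move: (agree y Ny) => /= ->; rewrite subrr.
  - move=> p /List.in_app_iff[l1p | [<- | l2p]] //; apply: chars';
      by rewrite def_l' List.in_app_iff /=; tauto.
  - by move: dist; rewrite def_l' !map_cat.
  - move=> x; rewrite lincomb_cons eq_l def_l' diff_lincomb_cons !lincomb_cat.
    by rewrite !lincomb_cons /=; ring.
move=> no_agree; exists D, ((a, chi) :: l'); split=> //.
- by move=> p [<- | l'p]; [| apply: chars'].
- constructor=> //; apply/List.Forall_forall => _ /List.in_map_iff[q [<- l'q]].
  apply: NNPP => same; apply: no_agree; exists q => // y Ny.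
  by apply: NNPP => neq; apply: same; exists y => // /esym.
- by move=> x; rewrite !lincomb_cons eq_l; ring.
Qed.

Lemma lincomb_vanishing_terms {l : seq (Cplx * (pt M -> Cplx))} :
  all_characters l ->
  (forall p, List.In p l -> forall x, N x -> p.1 * p.2 x = 0) ->
  exists2 D, vanishing_char_diffs D & forall x, lincomb l x = diff_lincomb D x.
Proof.
elim: l => [|[a chi] l IHl] chars van.
  by exists [::] => // x; rewrite /diff_lincomb /lincomb !big_nil.
have [D DN eq_l] :=
  IHl (fun p lp => chars p (or_intror lp)) (fun p lp => van p (or_intror lp)).
have [-> | a_neq0] := eqVneq a 0.
  by exists D => // x; rewrite lincomb_cons eq_l mul0r add0r.
exists ((a, (chi, fun _ => 0)) :: D); last first.
  by move=> x; rewrite lincomb_cons diff_lincomb_cons eq_l subr0.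
move=> p [<- | Dp]; last exact: DN.
split; [by apply: (chars (a, chi)); left | exact: character0 |].
move=> y Ny; have /eqP := van (a, chi) (or_introl erefl) y Ny.
by rewrite mulf_eq0 (negPf a_neq0) subr0 => /eqP.
Qed.

End CharacterDifferences.

Theorem mainTheorem2 (M : indMonoidLB) (N : pt M -> Prop) :
  commutative_im M -> split_wrt_L M -> submonoid N ->
  forall s : pt M -> Cplx,
    ideal_IN N s <->
    exists l : seq (Cplx * ((pt M -> Cplx) * (pt M -> Cplx))),
      (forall p, List.In p l ->
         [/\ character p.2.1, character p.2.2 &
             vanishes_on N (fun x => p.2.1 x - p.2.2 x)]) /\
      s = lincomb [seq (p.1, fun x => p.2.1 x - p.2.2 x) | p <- l].
Proof.
move=> _ split_ML [_ mulN] s; split; last first.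
  by move=> [D [DN ->]]; apply: vanishing_char_diffs_ideal.
move=> [sec_s van_s]; have [l [chars_l def_s]] := split_ML s sec_s.
have [D [l' [DN chars_l' dist_l' eq_l]]] := lincomb_characters_merge N chars_l.
have van_l' : forall x, N x -> lincomb l' x = 0.
  move=> x Nx; have [_ van_D] := vanishing_char_diffs_ideal N DN.
  by have := eq_l x; rewrite -def_s van_s // van_D // add0r => <-.
have [D' D'N eq_l'] := lincomb_vanishing_terms N chars_l'
  (twisted_artin mulN (fun x y _ _ => character_mul_twisted x y) chars_l' dist_l' van_l').
exists (D ++ D'); split.
  by move=> p /List.in_app_iff[Dp | D'p]; [apply: DN | apply: D'N].
apply: functional_extensionality => x.
by rewrite def_s eq_l eq_l' -diff_lincomb_cat.
Qed.
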